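(* Let $r \geq 2$, $2 \leq h \leq r$, let $k$ be a positive integer with $k \neq 2$, and let $G$ be a finite simple $r$-regular graph. If $G$ has an $h$-factor that is completely $k$-magic, then $G$ is completely $k$-magic.
   Context: $\mathbb{Z}_1 = \mathbb{Z}$ and for $k \geq 2$, $\mathbb{Z}_k$ is the integers modulo $k$. For $c \in \mathbb{Z}_k$, a graph $G$ is $c$-sum $k$-magic if there is an edge labeling $\ell : E(G) \to \mathbb{Z}_k \setminus \{0\}$ such that for every vertex $v$, $\sum_{u \in N(v)} \ell(uv) = c$ in $\mathbb{Z}_k$. $G$ is completely $k$-magic if it is $c$-sum $k$-magic for every $c \in \mathbb{Z}_k$. An $h$-factor of $G$ is an $h$-regular spanning subgraph of $G$. *)

From mathcomp Require Import all_boot all_order all_algebra.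
Set Implicit Arguments. Unset Strict Implicit. Unset Printing Implicit Defensive.
Import GRing.Theory Num.Theory.
Local Open Scope ring_scope.

(* Equality in Z_k: Z_1 = Z (plain equality of integers),
   Z_k = integers modulo k for k >= 2. *)
Definition eq_Zk (k : nat) (a b : int) : Prop :=
  if k == 1%N then a = b else (a = b %[mod k%:Z])%Z.

Definition simple_graph (T : finType) (e : rel T) : Prop :=
  symmetric e /\ irreflexive e.

Definition regular (T : finType) (e : rel T) (r : nat) : Prop :=
  forall v : T, #|[set u | e v u]| = r.

Definition is_factor (T : finType) (e f : rel T) (h : nat) : Prop :=
  symmetric f /\ (forall u v, f u v -> e u v) /\ regular f h.

(* c-sum k-magic: an edge labeling (represented as a function on ordered pairs
   that is symmetric on edges, i.e. a function on unordered edges) with labels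
   in Z_k \ {0} such that every vertex sum equals c in Z_k.  Elements of Z_k
   are represented by integers. *)
Definition csum_kmagic (T : finType) (e : rel T) (k : nat) (c : int) : Prop :=
  exists l : T -> T -> int,
    (forall u v, e u v -> l u v = l v u) /\
    (forall u v, e u v -> ~ eq_Zk k (l u v) 0) /\
    (forall v, eq_Zk k (\sum_(u | e v u) l v u) c).

Definition completely_kmagic (T : finType) (e : rel T) (k : nat) : Prop :=
  forall c : int, csum_kmagic e k c.

From mathcomp Require Import all_boot all_order all_algebra.
Import GRing.Theory Num.Theory.

(* Take a (c - (r - h))-sum labelling of the h-factor and give every other
   edge the label 1.  Every vertex meets exactly r - h edges outside the
   factor, so its sum becomes c. *)

Local Open Scope ring_scope.

Lemma eq_Zk_addr (k : nat) (a b d : int) :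
  eq_Zk k a b -> eq_Zk k (a + d) (b + d).
Proof.
rewrite /eq_Zk; case: ifP => _; first by move=> ->.
by move=> ab; rewrite -modzDml ab modzDml.
Qed.

Lemma eq_Zk_one_neq0 (k : nat) : (0 < k)%N -> ~ eq_Zk k 1 0.
Proof.
rewrite /eq_Zk => k_gt0; case: ifP => // /negbT k_neq1.
have k_gt1 : (1 < k)%N by rewrite ltn_neqAle eq_sym k_neq1 k_gt0.
by rewrite -[1]/(Posz 1) -[0]/(Posz 0) !modz_nat modn_small // mod0n.
Qed.

Section Subgraph.

Variables (T : finType) (e f : rel T).
Hypothesis f_sub_e : forall u v, f u v -> e u v.

Definition relD : rel T := fun u v => e u v && ~~ f u v.

Lemma regular_relD (r h : nat) :
  regular e r -> regular f h -> regular relD (r - h).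
Proof.
move=> e_reg f_reg v.
have e_f : [set u | e v u] :&: [set u | f v u] = [set u | f v u].
  by apply/setP => u; rewrite !inE andb_idl //; exact: f_sub_e.
rewrite -(e_reg v) -(f_reg v) -(cardsID [set u | f v u] [set u | e v u]) e_f.
by rewrite addKn; apply: eq_card => u; rewrite !inE andbC.
Qed.

Lemma sum_extend_labelling (l : T -> T -> int) (v : T) :
  \sum_(u | e v u) (if f v u then l v u else 1)
  = \sum_(u | f v u) l v u + #|[set u | relD v u]|%:R.
Proof.
rewrite (bigID (f v)) /=; congr (_ + _).
  apply: eq_big => [u|u /andP[_ ->] //].
  by rewrite andb_idl //; exact: f_sub_e.
rewrite (eq_bigr (fun _ => 1)) => [|u /andP[_ /negbTE ->] //].
by rewrite sumr_const cardsE.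
Qed.

Lemma csum_kmagic_extend (k d : nat) (c : int) :
  (0 < k)%N -> symmetric f -> regular relD d ->
  csum_kmagic f k (c - d%:R) -> csum_kmagic e k c.
Proof.
move=> k_gt0 f_sym relD_reg [l [l_sym [l_neq0 l_sum]]].
exists (fun u v => if f u v then l u v else 1); split; [|split].
- move=> u v _; rewrite f_sym; case: ifP => // fvu.
  by apply: l_sym; rewrite f_sym.
- by move=> u v _; case: ifP => [/l_neq0 //|_]; exact: eq_Zk_one_neq0.
- move=> v; rewrite sum_extend_labelling relD_reg -(subrK d%:R c).
  exact: eq_Zk_addr.
Qed.

End Subgraph.

Arguments regular_relD {T e f} f_sub_e {r h}.
Arguments csum_kmagic_extend {T e f} f_sub_e {k d c}.

Theorem theorem11 (T : finType) (e : rel T) (r h k : nat) :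
  (2 <= r)%N -> (2 <= h)%N -> (h <= r)%N -> (0 < k)%N -> k <> 2%N ->
  simple_graph e -> regular e r ->
  (exists f : rel T, is_factor e f h /\ completely_kmagic f k) ->
  completely_kmagic e k.
Proof.
move=> _ _ _ k_gt0 _ _ e_reg [f [[f_sym [f_sub_e f_reg]] f_magic]] c.
have relD_reg := regular_relD f_sub_e e_reg f_reg.
apply: (csum_kmagic_extend f_sub_e k_gt0 f_sym relD_reg).
exact: f_magic.
Qed.
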